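(* For every $L>0$, $n\ge1$ and $w\in\mathbb{R}$, $\mathcal{L}_{\mathrm{sig}}(w;D(\mathcal{F}^{+}_L))\ge\frac12\,\mathcal{L}_{\mathrm{sig}}(w;D(\mathcal{F}^{\mathrm{aff}}_L))$.
   Context: $(z)_+=\max(z,0)$; $\mathcal{U}^d$ is the uniform distribution on $\mathbb{S}^{d-1}$. $D(\mathcal{F}^{\mathrm{aff}}_L)$ is the distribution of $f(\mathbf{x})=l\,\mathbf{w}^\top\mathbf{x}+b$ with $\mathbf{w}\sim\mathcal{U}^d$, $l,b$ i.i.d. $\mathrm{Unif}([-L,L])$; $D(\mathcal{F}^+_L)$ is the distribution of $f(\mathbf{x})=l_1(\mathbf{w}^\top\mathbf{x})_++l_2(-\mathbf{w}^\top\mathbf{x})_++b$ with $\mathbf{w}\sim\mathcal{U}^d$ and $l_1,l_2,b$ i.i.d. $\mathrm{Unif}([-L,L])$ (all independent). For a task distribution $D$ and $w\in\mathbb{R}$, the signal term is $\mathcal{L}_{\mathrm{sig}}(w;D)=\mathbb{E}\Big[\Big(\frac{\sum_{i=1}^n(f(\mathbf{x}_i)-f(\mathbf{x}_{n+1}))e^{-w\|\mathbf{x}_i-\mathbf{x}_{n+1}\|^2}}{\sum_{j=1}^n e^{-w\|\mathbf{x}_j-\mathbf{x}_{n+1}\|^2}}\Big)^2\Big]$, where $f\sim D$ and $\mathbf{x}_1,\dots,\mathbf{x}_{n+1}$ i.i.d. $\sim\mathcal{U}^d$ independent of $f$. *)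

From HB Require Import structures.
From mathcomp Require Import all_boot all_order all_algebra.
From mathcomp Require Import all_classical all_reals all_analysis.
Set Implicit Arguments.
Unset Strict Implicit.
Unset Printing Implicit Defensive.
Import Order.TTheory GRing.Theory Num.Theory.
Import numFieldNormedType.Exports.
Local Open Scope classical_set_scope.
Local Open Scope ring_scope.

Section Defs.
Variable R : realType.

Definition dotp (d : nat) (u v : d.-tuple R) : R :=
  \sum_(i < d) tnth u i * tnth v i.
Definition sqnorm (d : nat) (u : d.-tuple R) : R := dotp u u.
Definition enorm (d : nat) (u : d.-tuple R) : R := Num.sqrt (sqnorm u).
Definition vsub (d : nat) (u v : d.-tuple R) : d.-tuple R :=
  [tuple tnth u i - tnth v i | i < d].
Definition vscale (d : nat) (c : R) (u : d.-tuple R) : d.-tuple R :=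
  [tuple c * tnth u i | i < d].

(* expectation of g(X_1,...,X_k) for X_1,...,X_k i.i.d. with expectation
   functional E (iterated integral; for nonnegative integrands this is the
   joint expectation by Tonelli) *)
Fixpoint iter_expect (T : Type) (E : (T -> \bar R) -> \bar R) (k : nat) :
    (k.-tuple T -> \bar R) -> \bar R :=
  match k with
  | 0 => fun g => g [tuple]
  | k'.+1 => fun g => E (fun x => iter_expect E (fun t => g (cons_tuple x t)))
  end.

Definition leb_int (d : nat) (g : d.-tuple R -> \bar R) : \bar R :=
  @iter_expect _ (fun h : R -> \bar R => (\int[lebesgue_measure]_x h x)%E) d g.

(* E_{u ~ U^d}[h(u)], U^d the uniform (normalized surface) measure on
   S^{d-1}, given as the normalized cone measure:
   (1/|B^d|) * \int_{0 < |x| <= 1} h(x/|x|) dx *)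
Definition sphere_expect (d : nat) (h : d.-tuple R -> \bar R) : \bar R :=
  (leb_int (fun x => if ((0 < enorm x) && (enorm x <= 1))%R
                     then h (vscale (enorm x)^-1%R x) else 0%E) *
   ((fine (leb_int (fun x : d.-tuple R => if (enorm x <= 1)%R then 1%E else 0%E)))^-1)%:E)%E.

Definition unif_expect (L : R) (h : R -> \bar R) : \bar R :=
  (((2 * L)^-1)%:E * \int[lebesgue_measure]_(t in [set t : R | (-L <= t <= L)%R]) h t)%E.

(* A task distribution D is represented by its expectation functional
   Phi |-> E_{f ~ D}[Phi f]. *)

Definition D_aff (d : nat) (L : R) (Phi : (d.-tuple R -> R) -> \bar R) : \bar R :=
  sphere_expect (fun wv => unif_expect L (fun l => unif_expect L (fun b =>
    Phi (fun x => l * dotp wv x + b)))).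

Definition D_plus (d : nat) (L : R) (Phi : (d.-tuple R -> R) -> \bar R) : \bar R :=
  sphere_expect (fun wv => unif_expect L (fun l1 => unif_expect L (fun l2 =>
    unif_expect L (fun b =>
    Phi (fun x => l1 * Num.max (dotp wv x) 0 + l2 * Num.max (- dotp wv x) 0 + b))))).

(* the squared signal error for a given f, context xs = (x_1..x_n), query q *)
Definition sig_err (d n : nat) (w : R) (f : d.-tuple R -> R)
    (xs : n.-tuple (d.-tuple R)) (q : d.-tuple R) : R :=
  ((\sum_(i < n) (f (tnth xs i) - f q) * expR (- w * sqnorm (vsub (tnth xs i) q)))
   / (\sum_(j < n) expR (- w * sqnorm (vsub (tnth xs j) q)))) ^+ 2.

Definition L_sig (d n : nat) (w : R)
    (D : ((d.-tuple R -> R) -> \bar R) -> \bar R) : \bar R :=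
  D (fun f => sphere_expect (fun q =>
       @iter_expect _ (@sphere_expect d) n (fun xs => (sig_err w f xs q)%:E))).

End Defs.

From Pilot Require Import Defs.
From mathcomp Require Import all_boot all_order all_algebra.
From mathcomp Require Import all_classical all_reals all_analysis.
From mathcomp Require Import measurable_realfun lebesgue_integral_nonneg.
From mathcomp Require Import lra ring.
Import Order.TTheory GRing.Theory Num.Theory.
Local Open Scope classical_set_scope.
Local Open Scope ring_scope.

(* For a fixed direction w, write p = (w.x)_+ and m = (-w.x)_+, so that w.x = p - m.
   The signal error is the square of a linear functional of f - f(x_{n+1}), so the
   bias cancels and for f = l1 p + l2 m + b it equals (l1 A + l2 B)^2, where A and B
   are the kernel-smoothed residuals of p and m; the affine task l (w.x) + b is the
   case (l1, l2) = (l, -l).  With Q(c1, c2) = E[(c1 A + c2 B)^2] the parallelogram law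
   Q(c1, c2) + Q(c1, -c2) = 2 c1^2 E[A^2] + 2 c2^2 E[B^2] and the symmetry l2 -> -l2
   of the uniform law give 2 E[Q(l1, l2)] = E[2 l^2] (E[A^2] + E[B^2]), whereas
   Q(l, -l) <= Q(l, -l) + Q(l, l) = 2 l^2 (E[A^2] + E[B^2]).
   All expectations are used only through positivity, linearity, monotonicity and
   Tonelli-measurability on nonnegative integrands. *)

Definition nonneg_fun {R : realType} {T : Type} (f : T -> \bar R) := forall t, (0 <= f t)%E.

(* The only properties of the (iterated, normalized) integrals in [Defs] that
   the argument uses.  The last field is the measurability half of Tonelli. *)
Record is_expectation {R : realType} d (T : measurableType d) (E : (T -> \bar R) -> \bar R) :
    Prop := IsExpectation {
  expectation_ge0 : forall f, nonneg_fun f -> (0 <= E f)%E;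
  expectationD : forall f g : T -> \bar R,
    measurable_fun [set: T] f -> measurable_fun [set: T] g ->
    nonneg_fun f -> nonneg_fun g -> E (fun t => f t + g t)%E = (E f + E g)%E;
  expectationZl : forall (k : R) (f : T -> \bar R), 0 <= k ->
    measurable_fun [set: T] f -> nonneg_fun f ->
    E (fun t => k%:E * f t)%E = (k%:E * E f)%E;
  le_expectation : forall f g : T -> \bar R,
    measurable_fun [set: T] f -> measurable_fun [set: T] g ->
    nonneg_fun f -> (forall t, f t <= g t)%E -> (E f <= E g)%E;
  measurable_expectation : forall d' (X : measurableType d') (F : X * T -> \bar R),
    measurable_fun [set: X * T] F -> nonneg_fun F ->
    measurable_fun [set: X] (fun x => E (fun t => F (x, t)))
}.
Arguments is_expectation {R d T}.
Arguments expectation_ge0 {R d T E}.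
Arguments expectationD {R d T E}.
Arguments expectationZl {R d T E}.
Arguments le_expectation {R d T E}.
Arguments measurable_expectation {R d T E} _ {d' X}.

Section expectation.
Context {R : realType}.
Local Open Scope ereal_scope.

Lemma lebesgue_is_expectation :
  is_expectation (fun h : R -> \bar R => \int[lebesgue_measure]_x h x).
Proof.
constructor.
- by move=> f f0; apply: integral_ge0.
- by move=> f g mf mg f0 g0; apply: ge0_integralD.
- by move=> k f k0 mf f0; apply: ge0_integralZl_EFin.
- by move=> f g mf mg f0 fg; apply: ge0_le_integral.
- move=> d' X F mF F0.
  exact: (measurable_fun_fubini_tonelli_F (m2 := lebesgue_measure) F mF F0).
Qed.

Section restrict_comp.
Context d1 (T : measurableType d1) d2 (T' : measurableType d2).
Variables (E : (T -> \bar R) -> \bar R) (C : T -> bool) (phi : T -> T').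
Hypotheses (hE : is_expectation E) (mC : measurable_fun [set: T] C)
  (mphi : measurable_fun [set: T] phi).

Let restrict (h : T' -> \bar R) t := if C t then h (phi t) else 0.

Let measurable_restrict {h} : measurable_fun [set: T'] h ->
  measurable_fun [set: T] (restrict h).
Proof. by move=> mh; apply: measurable_fun_ifT => //; exact: measurableT_comp. Qed.

Let restrict_ge0 {h} : nonneg_fun h -> nonneg_fun (restrict h).
Proof. by move=> h0 t; rewrite /restrict; case: (C t). Qed.

Lemma is_expectation_restrict_comp :
  is_expectation (fun h : T' -> \bar R => E (restrict h)).
Proof.
constructor.
- by move=> f f0; apply: (expectation_ge0 hE); exact: restrict_ge0.
- move=> f g mf mg f0 g0.
  rewrite -(expectationD hE _ _ (measurable_restrict mf) (measurable_restrict mg)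
    (restrict_ge0 f0) (restrict_ge0 g0)).
  by congr E; apply/funext => t; rewrite /restrict; case: (C t); rewrite ?adde0.
- move=> k f k0 mf f0.
  rewrite -(expectationZl hE _ _ k0 (measurable_restrict mf) (restrict_ge0 f0)).
  by congr E; apply/funext => t; rewrite /restrict; case: (C t); rewrite ?mule0.
- move=> f g mf mg f0 fg.
  apply: (le_expectation hE _ _ (measurable_restrict mf) (measurable_restrict mg)
    (restrict_ge0 f0)) => t.
  by rewrite /restrict; case: (C t).
- move=> d' X F mF F0; rewrite /restrict.
  apply: (measurable_expectation hE (fun p => if C p.2 then F (p.1, phi p.2) else 0)).
  + apply: measurable_fun_ifT; first exact: measurableT_comp.
    * apply: measurableT_comp mF _; apply: measurable_fun_pair => //.
      exact: measurableT_comp.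
    * exact: measurable_cst.
  + by move=> p; case: (C p.2).
Qed.

End restrict_comp.
Arguments is_expectation_restrict_comp {d1 T d2 T' E C phi}.

Lemma is_expectation_scaler {d} {T : measurableType d} {E : (T -> \bar R) -> \bar R}
    (c : R) : is_expectation E -> (0 <= c)%R -> is_expectation (fun h => E h * c%:E).
Proof.
move=> hE c0; constructor.
- by move=> f f0; apply: mule_ge0; [exact: expectation_ge0|rewrite lee_fin].
- move=> f g mf mg f0 g0.
  by rewrite expectationD // ge0_muleDl //; exact: expectation_ge0.
- by move=> k f k0 mf f0; rewrite expectationZl // muleA.
- move=> f g mf mg f0 fg; apply: lee_wpmul2r; first by rewrite lee_fin.
  exact: le_expectation.
- move=> d' X F mF F0; under eq_fun do rewrite muleC.
  by apply: measurable_funeM; exact: (measurable_expectation hE).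
Qed.

Section pair.
Context d1 (T1 : measurableType d1) d2 (T2 : measurableType d2).
Variables (E1 : (T1 -> \bar R) -> \bar R) (E2 : (T2 -> \bar R) -> \bar R).
Hypotheses (hE1 : is_expectation E1) (hE2 : is_expectation E2).

Let inner (f : T1 * T2 -> \bar R) x := E2 (fun y => f (x, y)).

Let measurable_inner {f} : measurable_fun [set: T1 * T2] f -> nonneg_fun f ->
  measurable_fun [set: T1] (inner f).
Proof. exact: measurable_expectation. Qed.

Let inner_ge0 {f} : nonneg_fun f -> nonneg_fun (inner f).
Proof. by move=> f0 x; apply: (expectation_ge0 hE2) => y; exact: f0. Qed.

Lemma is_expectation_pair :
  is_expectation (fun f : T1 * T2 -> \bar R => E1 (inner f)).
Proof.
constructor.
- by move=> f f0; apply: (expectation_ge0 hE1); exact: inner_ge0.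
- move=> f g mf mg f0 g0.
  rewrite -(expectationD hE1 _ _ (measurable_inner mf f0) (measurable_inner mg g0)
    (inner_ge0 f0) (inner_ge0 g0)).
  congr E1; apply/funext => x; apply: expectationD => //;
    by [exact: measurable_fun_pair2 | move=> y; exact: f0 | move=> y; exact: g0].
- move=> k f k0 mf f0.
  rewrite -(expectationZl hE1 _ _ k0 (measurable_inner mf f0) (inner_ge0 f0)).
  congr E1; apply/funext => x; apply: expectationZl => //;
    by [exact: measurable_fun_pair2 | move=> y; exact: f0].
- move=> f g mf mg f0 fg.
  have g0 : nonneg_fun g by move=> p; apply: le_trans (fg p); exact: f0.
  apply: (le_expectation hE1 _ _ (measurable_inner mf f0) (measurable_inner mg g0)
    (inner_ge0 f0)) => x.
  apply: le_expectation => //;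
    by [exact: measurable_fun_pair2 | move=> y; exact: f0 | move=> y; exact: fg].
- move=> d' X F mF F0; rewrite /inner.
  apply: (measurable_expectation hE1 (fun p => E2 (fun y => F (p.1, (p.2, y))))).
  + apply: (measurable_expectation hE2 (fun q => F (q.1.1, (q.1.2, q.2)))).
    * apply: measurableT_comp mF _; apply: measurable_fun_pair.
      - exact: measurableT_comp.
      - by apply: measurable_fun_pair => //; exact: measurableT_comp.
    * by move=> q; exact: F0.
  + by move=> p; apply: (expectation_ge0 hE2) => y; exact: F0.
Qed.

End pair.
Arguments is_expectation_pair {d1 T1 d2 T2 E1 E2}.

Lemma is_expectation_iter {d} {T : measurableType d} {E : (T -> \bar R) -> \bar R} k :
  is_expectation E -> is_expectation (@iter_expect R T E k).
Proof.
move=> hE; elim: k => [|k IH].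
- constructor => //= d' X F mF F0.
  by apply: measurableT_comp mF _; exact: measurable_fun_pair.
- have mcons : measurable_fun [set: T * k.-tuple T] (fun p => cons_tuple p.1 p.2).
    exact: measurable_cons.
  exact: (is_expectation_restrict_comp (C := xpredT)
    (is_expectation_pair hE IH) (measurable_cst true) mcons).
Qed.

Lemma expectation_half_le {d} {T : measurableType d} {E : (T -> \bar R) -> \bar R}
    {f g : T -> \bar R} : is_expectation E ->
  measurable_fun [set: T] f -> measurable_fun [set: T] g ->
  nonneg_fun f -> nonneg_fun g -> (forall t, f t <= g t + g t) ->
  (1 / 2 : R)%:E * E f <= E g.
Proof.
move=> hE mf mg f0 g0 fg.
have Eg0 : 0 <= E g by exact: expectation_ge0.
have Ef_le : E f <= E g + E g.
  rewrite -expectationD //; apply: le_expectation => //.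
  exact: emeasurable_funD.
apply: le_trans (lee_wpmul2l _ Ef_le) _; first by rewrite lee_fin.
rewrite ge0_muleDr // -ge0_muleDl ?lee_fin // -EFinD.
by rewrite -mulrDl -(natrD R 1 1) divff // mul1e.
Qed.

Lemma measurable_invr : measurable_fun [set: R] (@GRing.inv R).
Proof.
have -> : GRing.inv = (fun x : R => if x == 0 then 0 else x^-1)%R.
  by apply/funext => x; case: eqP => // ->; rewrite invr0.
apply: measurable_fun_if => //; first exact: measurable_fun_eqr.
rewrite setTI (_ : _ @^-1` _ = ~` [set 0%R]); last first.
  by apply/seteqP; split => x /=; case: eqP.
apply: open_continuous_measurable_fun.
- apply: closed_openC; apply: compact_closed; first exact: Rhausdorff.
  exact/finite_compact/finite_set1.
- by move=> x; rewrite inE /= => /eqP x0; exact: inv_continuous.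
Qed.

Section measurable_geometry.
Context dY (Y : measurableType dY) (k : nat).
Variables f g : Y -> k.-tuple R.
Hypotheses (mf : measurable_fun [set: Y] f) (mg : measurable_fun [set: Y] g).

Let measurable_coord (h : Y -> k.-tuple R) i :
  measurable_fun [set: Y] h -> measurable_fun [set: Y] (fun y => tnth (h y) i).
Proof. exact: measurableT_comp (measurable_tnth i). Qed.

Lemma measurable_dotp : measurable_fun [set: Y] (fun y => dotp (f y) (g y)).
Proof.
apply: measurable_sum => i.
by apply: measurable_funM; exact: measurable_coord.
Qed.

Lemma measurable_vsub : measurable_fun [set: Y] (fun y => vsub (f y) (g y)).
Proof.
apply/measurable_fun_tnthP => i.
rewrite (_ : _ \o _ = fun y => tnth (f y) i - tnth (g y) i)%R; last first.
  by apply/funext => y /=; rewrite tnth_mktuple.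
by apply: measurable_funB; exact: measurable_coord.
Qed.

Lemma measurable_vscale (c : Y -> R) : measurable_fun [set: Y] c ->
  measurable_fun [set: Y] (fun y => vscale (c y) (f y)).
Proof.
move=> mc; apply/measurable_fun_tnthP => i.
rewrite (_ : _ \o _ = fun y => c y * tnth (f y) i)%R; last first.
  by apply/funext => y /=; rewrite tnth_mktuple.
by apply: measurable_funM => //; exact: measurable_coord.
Qed.

End measurable_geometry.

Lemma measurable_enorm k : measurable_fun [set: k.-tuple R] (@enorm R k).
Proof.
apply: measurableT_comp; first exact: continuous_measurable_fun (@sqrt_continuous R).
exact: measurable_dotp.
Qed.

Lemma sphere_expect_is_expectation k : is_expectation (@sphere_expect R k).
Proof.
have hleb := is_expectation_iter k lebesgue_is_expectation.
have mshell : measurable_fun [set: k.-tuple R]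
    (fun x => (0 < enorm x)%R && (enorm x <= 1)%R).
  by apply: measurable_and; [apply: measurable_fun_ltr|apply: measurable_fun_ler];
    rewrite //; exact: measurable_enorm.
have mproj : measurable_fun [set: k.-tuple R] (fun x => vscale (enorm x)^-1 x).
  apply: measurable_vscale => //.
  exact: measurableT_comp measurable_invr (measurable_enorm k).
apply: is_expectation_scaler (is_expectation_restrict_comp hleb mshell mproj) _.
rewrite invr_ge0; apply: fine_ge0; apply: (expectation_ge0 hleb) => x.
by case: ifP.
Qed.

Section uniform.
Variable L : R.
Hypothesis L_gt0 : (0 < L)%R.
Local Notation U := (unif_expect L).

Lemma unif_expect_is_expectation : is_expectation U.
Proof.
have mI : measurable_fun [set: R] (fun t : R => (-L <= t <= L)%R).
  by apply: measurable_and; apply: measurable_fun_ler.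
have -> : U = fun h => (\int[lebesgue_measure]_t
    (if (-L <= t <= L)%R then h t else 0)) * ((2 * L)^-1)%:E.
  apply/funext => h; rewrite /unif_expect integral_mkcond muleC.
  by congr (_ * _); apply: eq_integral => t _; rewrite /patch mem_setE.
apply: is_expectation_scaler; last by rewrite invr_ge0 mulr_ge0 // ltW.
exact: (is_expectation_restrict_comp lebesgue_is_expectation mI
  (@measurable_id _ _ setT)).
Qed.

Lemma unif_expect_cst k : U (fun _ => k) = k.
Proof.
rewrite /unif_expect -set_itvcc integral_cst; last exact: measurable_itv.
set len := (X in k * X).
have -> : len = (2 * L)%:E.
  change (lebesgue_measure (`[(- L)%R, L]%classic : set R) = (2 * L)%:E).
  rewrite lebesgue_measure_itv /= lte_fin gtrN // -EFinB opprK.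
  by congr EFin; rewrite mulr2n mulrDl mul1r.
by rewrite muleCA -EFinM mulVf ?mule1 // mulf_neq0 // gt_eqF.
Qed.

Lemma unif_expectN h : measurable_fun [set: R] h -> nonneg_fun h ->
  U (fun t => h (- t)%R) = U h.
Proof.
move=> mh h0; rewrite /unif_expect; congr (_ * _); symmetry.
have mI : measurable [set t : R | (-L <= t <= L)%R].
  by rewrite -set_itvcc; exact: measurable_itv.
transitivity (\int[pushforward lebesgue_measure (-%R : R -> measurableTypeR R)]_(t in
    [set t : R | (-L <= t <= L)%R]) h t).
  by apply: eq_measure_integral => A mA _; exact: (esym (lebesgue_measureN mA)).
rewrite ge0_integral_pushforward //; last exact: measurable_funS mh.
congr (integral _ _ _); apply/seteqP.
by split => t /= /andP[? ?]; apply/andP; split; lra.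
Qed.

End uniform.

Section signal.
Variables (d n : nat) (w : R).
Local Open Scope ring_scope.
Local Notation point := (d.-tuple R).
Local Notation sample := (point * n.-tuple point)%type.

Definition relu_pos (wv x : point) : R := Num.max (dotp wv x) 0.
Definition relu_neg (wv x : point) : R := Num.max (- dotp wv x) 0.

Lemma dotp_relu wv x : dotp wv x = relu_pos wv x - relu_neg wv x.
Proof.
case: (lerP 0 (dotp wv x)) => h.
- have -> : relu_pos wv x = dotp wv x by apply: max_l.
  have -> : relu_neg wv x = 0 by apply: max_r; rewrite oppr_le0.
  by rewrite subr0.
- have -> : relu_pos wv x = 0 by apply: max_r; rewrite ltW.
  have -> : relu_neg wv x = - dotp wv x by apply: max_l; rewrite oppr_ge0 ltW.
  by rewrite sub0r opprK.
Qed.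

(* A sample [(q, xs)] is a query point and the context [x_1, ..., x_n]. *)
Definition kernel_weight (z : sample) (i : 'I_n) : R :=
  expR (- w * sqnorm (vsub (tnth z.2 i) z.1)).

Definition kernel_resid (u : point -> R) (z : sample) : R :=
  (\sum_(i < n) (u (tnth z.2 i) - u z.1) * kernel_weight z i) /
  (\sum_(j < n) kernel_weight z j).

Lemma sig_err_lin c1 c2 b (u v : point -> R) xs q :
  sig_err w (fun x => c1 * u x + c2 * v x + b) xs q =
  (c1 * kernel_resid u (q, xs) + c2 * kernel_resid v (q, xs)) ^+ 2.
Proof.
rewrite /sig_err /kernel_resid; congr (_ ^+ 2).
rewrite (eq_bigr (fun i => c1 * ((u (tnth xs i) - u q) * kernel_weight (q, xs) i) +
  c2 * ((v (tnth xs i) - v q) * kernel_weight (q, xs) i))); last first.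
  by move=> i _; rewrite /kernel_weight; ring.
by rewrite big_split /= -!mulr_sumr mulrDl !mulrA.
Qed.

Lemma measurable_relu_pos : measurable_fun [set: point * point] (fun p => relu_pos p.1 p.2).
Proof. by apply: measurable_maxr => //; exact: measurable_dotp. Qed.

Lemma measurable_relu_neg : measurable_fun [set: point * point] (fun p => relu_neg p.1 p.2).
Proof.
by apply: measurable_maxr => //; apply: measurable_funN; exact: measurable_dotp.
Qed.

Lemma measurable_kernel_resid dY (Y : measurableType dY) (u : point -> point -> R)
    (wv : Y -> point) (z : Y -> sample) :
  measurable_fun [set: point * point] (fun p => u p.1 p.2) ->
  measurable_fun [set: Y] wv -> measurable_fun [set: Y] z ->
  measurable_fun [set: Y] (fun y => kernel_resid (u (wv y)) (z y)).
Proof.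
move=> mu mwv mz.
have mq : measurable_fun [set: Y] (fun y => (z y).1) by exact: measurableT_comp.
have mx i : measurable_fun [set: Y] (fun y => tnth (z y).2 i).
  by apply: measurableT_comp (measurable_tnth i) _; exact: measurableT_comp.
have mu_at (g : Y -> point) : measurable_fun [set: Y] g ->
    measurable_fun [set: Y] (fun y => u (wv y) (g y)).
  move=> mg; apply: (measurableT_comp (f := fun p => u p.1 p.2)
    (g := fun y => (wv y, g y))) => //.
  exact: measurable_fun_pair.
have mweight i : measurable_fun [set: Y] (fun y => kernel_weight (z y) i).
  apply: measurableT_comp; first exact: measurable_expR.
  apply: measurable_funM => //.
  by apply: measurable_dotp; exact: measurable_vsub.
apply: measurable_funM.
- by apply: measurable_sum => i; apply: measurable_funM => //;
    apply: measurable_funB; exact: mu_at.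
- apply: measurableT_comp; first exact: measurable_invr.
  by apply: measurable_sum => i; exact: mweight.
Qed.

Definition sample_expect (G : sample -> \bar R) : \bar R :=
  sphere_expect (fun q => iter_expect (@sphere_expect R d) (fun xs => G (q, xs))).

Lemma sample_expect_is_expectation : is_expectation sample_expect.
Proof.
exact: is_expectation_pair (sphere_expect_is_expectation d)
  (is_expectation_iter n (sphere_expect_is_expectation d)).
Qed.

Definition resid_energy (u : point -> R) : \bar R :=
  sample_expect (fun z => (kernel_resid u z ^+ 2)%:E).

Lemma resid_energy_ge0 u : (0 <= resid_energy u)%E.
Proof.
by apply: (expectation_ge0 sample_expect_is_expectation) => z; rewrite lee_fin sqr_ge0.
Qed.

Definition sig_quad (wv : point) (c1 c2 : R) : \bar R :=
  sample_expect (fun z =>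
    ((c1 * kernel_resid (relu_pos wv) z + c2 * kernel_resid (relu_neg wv) z) ^+ 2)%:E).

Lemma sig_quad_ge0 wv c1 c2 : (0 <= sig_quad wv c1 c2)%E.
Proof.
by apply: (expectation_ge0 sample_expect_is_expectation) => z; rewrite lee_fin sqr_ge0.
Qed.

Lemma measurable_sig_quad dY (Y : measurableType dY) (wv : Y -> point) (c1 c2 : Y -> R) :
  measurable_fun [set: Y] wv -> measurable_fun [set: Y] c1 -> measurable_fun [set: Y] c2 ->
  measurable_fun [set: Y] (fun y => sig_quad (wv y) (c1 y) (c2 y)).
Proof.
move=> mwv mc1 mc2.
apply: (measurable_expectation sample_expect_is_expectation
  (fun p : Y * sample => ((c1 p.1 * kernel_resid (relu_pos (wv p.1)) p.2 +
     c2 p.1 * kernel_resid (relu_neg (wv p.1)) p.2) ^+ 2)%:E)); last first.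
  by move=> p; rewrite lee_fin sqr_ge0.
have mwv1 : measurable_fun [set: Y * sample] (fun p => wv p.1) by exact: measurableT_comp.
apply/measurable_EFinP; apply: measurable_funX.
apply: measurable_funD; apply: measurable_funM.
- exact: measurableT_comp.
- exact: measurable_kernel_resid measurable_relu_pos mwv1 measurable_snd.
- exact: measurableT_comp.
- exact: measurable_kernel_resid measurable_relu_neg mwv1 measurable_snd.
Qed.

Lemma sig_quad_parallelogram wv c1 c2 :
  (sig_quad wv c1 c2 + sig_quad wv c1 (- c2) =
   (2 * c1 ^+ 2)%:E * resid_energy (relu_pos wv) +
   (2 * c2 ^+ 2)%:E * resid_energy (relu_neg wv))%E.
Proof.
have hS := sample_expect_is_expectation.
have mresid (u : point -> point -> R) :
    measurable_fun [set: point * point] (fun p => u p.1 p.2) ->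
    measurable_fun [set: sample] (kernel_resid (u wv)).
  move=> mu; exact: (@measurable_kernel_resid _ _ _ (fun _ => wv) id mu
    (measurable_cst _) (@measurable_id _ _ setT)).
have mA := mresid _ measurable_relu_pos; have mB := mresid _ measurable_relu_neg.
set A := kernel_resid (relu_pos wv) in mA *; set B := kernel_resid (relu_neg wv) in mB *.
have msq (f : sample -> R) : measurable_fun [set: sample] f ->
    measurable_fun [set: sample] (fun z => (f z ^+ 2)%:E).
  by move=> mf; apply/measurable_EFinP; exact: measurable_funX.
have sq_ge0 (f : sample -> R) : nonneg_fun (fun z => (f z ^+ 2)%:E).
  by move=> z; rewrite lee_fin sqr_ge0.
have mlin (a b : R) : measurable_fun [set: sample] (fun z => a * A z + b * B z).
  by apply: measurable_funD; exact: measurable_funM.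
have k_ge0 (c : R) : 0 <= 2 * c ^+ 2 by rewrite mulr_ge0 // sqr_ge0.
have mk (c : R) (f : sample -> R) : measurable_fun [set: sample] f ->
    measurable_fun [set: sample] (fun z => ((2 * c ^+ 2)%:E * (f z ^+ 2)%:E)%E).
  by move=> mf; apply: measurable_funeM; exact: msq.
have k_sq_ge0 (c : R) (f : sample -> R) :
    nonneg_fun (fun z => ((2 * c ^+ 2)%:E * (f z ^+ 2)%:E)%E).
  by move=> z; apply: mule_ge0; rewrite lee_fin ?k_ge0 ?sqr_ge0.
rewrite /sig_quad /resid_energy -/A -/B.
rewrite -(expectationD hS _ _ (msq _ (mlin _ _)) (msq _ (mlin _ _)) (sq_ge0 _) (sq_ge0 _)).
rewrite -(expectationZl hS _ _ (k_ge0 c1) (msq _ mA) (sq_ge0 _)).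
rewrite -(expectationZl hS _ _ (k_ge0 c2) (msq _ mB) (sq_ge0 _)).
rewrite -(expectationD hS _ _ (mk _ _ mA) (mk _ _ mB) (k_sq_ge0 _ _) (k_sq_ge0 _ _)).
by congr sample_expect; apply/funext => z; rewrite -!EFinM -!EFinD; congr EFin; ring.
Qed.

Section uniform_coefficients.
Variable L : R.
Hypothesis L_gt0 : 0 < L.
Local Notation U := (unif_expect L).
Let hU := unif_expect_is_expectation L L_gt0.

Let measurable_scale_sq (c : \bar R) :
  measurable_fun [set: R] (fun l : R => ((2 * l ^+ 2)%:E * c)%E).
Proof.
under eq_fun do rewrite muleC.
by apply: measurable_funeM; apply/measurable_EFinP; exact: measurable_funM.
Qed.

Let scale_sq_ge0 (c : \bar R) :
  (0 <= c)%E -> nonneg_fun (fun l : R => ((2 * l ^+ 2)%:E * c)%E).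
Proof. by move=> c0 l; apply: mule_ge0; rewrite // lee_fin mulr_ge0 // sqr_ge0. Qed.

Section fixed_direction.
Variable wv : point.
Let a := resid_energy (relu_pos wv).
Let b := resid_energy (relu_neg wv).

Let measurable_sig_quad_at c1 : measurable_fun [set: R] (sig_quad wv c1).
Proof.
exact: (@measurable_sig_quad _ _ (fun _ => wv) (fun _ => c1) id (measurable_cst _)
  (measurable_cst _) (@measurable_id _ _ setT)).
Qed.

Let measurable_unif_sig_quad : measurable_fun [set: R] (fun c1 => U (sig_quad wv c1)).
Proof.
apply: (measurable_expectation hU (fun p : R * R => sig_quad wv p.1 p.2)).
  exact: measurable_sig_quad.
by move=> p; exact: sig_quad_ge0.
Qed.

(* The symmetry [l2 -> -l2] of the uniform law lets the parallelogram law
   eliminate the cross term. *)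
Lemma unif_sig_quad_double c1 : (U (sig_quad wv c1) + U (sig_quad wv c1) =
  (2 * c1 ^+ 2)%:E * a + U (fun l => (2 * l ^+ 2)%:E * b))%E.
Proof.
rewrite -{2}(unif_expectN _ _ (measurable_sig_quad_at c1) (@sig_quad_ge0 wv c1)).
rewrite -(expectationD hU); last 4 first.
- exact: measurable_sig_quad_at.
- exact: measurableT_comp (measurable_sig_quad_at c1) (@oppr_measurable R setT).
- exact: sig_quad_ge0.
- by move=> t; exact: sig_quad_ge0.
under eq_fun do rewrite sig_quad_parallelogram.
rewrite (expectationD hU _ _ (measurable_cst _) (measurable_scale_sq b)).
rewrite ?unif_expect_cst //.
- by move=> t; apply: mule_ge0; rewrite ?resid_energy_ge0 // lee_fin mulr_ge0 // sqr_ge0.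
- exact: scale_sq_ge0 (resid_energy_ge0 _).
Qed.

Lemma unif2_sig_quad_double :
  (U (fun l1 => U (sig_quad wv l1)) + U (fun l1 => U (sig_quad wv l1)) =
   U (fun l => (2 * l ^+ 2)%:E * a) + U (fun l => (2 * l ^+ 2)%:E * b))%E.
Proof.
have UQ_ge0 c1 : (0 <= U (sig_quad wv c1))%E.
  by apply: (expectation_ge0 hU) => t; exact: sig_quad_ge0.
rewrite -(expectationD hU _ _ measurable_unif_sig_quad measurable_unif_sig_quad
  UQ_ge0 UQ_ge0).
under eq_fun do rewrite unif_sig_quad_double.
rewrite (expectationD hU _ _ (measurable_scale_sq a) (measurable_cst _)).
rewrite ?unif_expect_cst //.
- exact: scale_sq_ge0 (resid_energy_ge0 _).
- by move=> t; apply: (expectation_ge0 hU); exact: scale_sq_ge0 (resid_energy_ge0 _).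
Qed.

Lemma sig_quad_aff_le l :
  (sig_quad wv l (- l) <= (2 * l ^+ 2)%:E * a + (2 * l ^+ 2)%:E * b)%E.
Proof.
have := sig_quad_parallelogram wv l (- l); rewrite opprK sqrrN -/a -/b => <-.
by apply: leeDl; exact: sig_quad_ge0.
Qed.

Lemma unif_sig_quad_aff_le : (U (fun l => sig_quad wv l (- l)) <=
  U (fun l1 => U (sig_quad wv l1)) + U (fun l1 => U (sig_quad wv l1)))%E.
Proof.
rewrite unif2_sig_quad_double -(expectationD hU) //; last 2 first.
- exact: scale_sq_ge0 (resid_energy_ge0 _).
- exact: scale_sq_ge0 (resid_energy_ge0 _).
apply: le_expectation => //.
- exact: measurable_sig_quad (measurable_cst _) (@measurable_id _ _ setT)
    (@oppr_measurable R setT).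
- by apply: emeasurable_funD; exact: measurable_scale_sq.
- by move=> l; exact: sig_quad_ge0.
- exact: sig_quad_aff_le.
Qed.

End fixed_direction.
End uniform_coefficients.

Section tasks.
Variable L : R.
Hypothesis L_gt0 : 0 < L.
Local Notation U := (unif_expect L).
Let hU := unif_expect_is_expectation L L_gt0.

Lemma L_sig_plus_eq : L_sig n w (@D_plus R d L) =
  sphere_expect (fun wv => U (fun l1 => U (sig_quad wv l1))).
Proof.
rewrite /L_sig /D_plus; congr sphere_expect; apply/funext => wv.
congr unif_expect; apply/funext => l1; congr unif_expect; apply/funext => l2.
rewrite -[RHS](unif_expect_cst _ L_gt0); congr unif_expect; apply/funext => b.
rewrite /sig_quad /sample_expect; congr sphere_expect; apply/funext => q.
congr iter_expect; apply/funext => xs; congr EFin.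
exact: (sig_err_lin l1 l2 b (relu_pos wv) (relu_neg wv)).
Qed.

Lemma L_sig_aff_eq : L_sig n w (@D_aff R d L) =
  sphere_expect (fun wv => U (fun l => sig_quad wv l (- l))).
Proof.
rewrite /L_sig /D_aff; congr sphere_expect; apply/funext => wv.
congr unif_expect; apply/funext => l.
rewrite -[RHS](unif_expect_cst _ L_gt0); congr unif_expect; apply/funext => b.
rewrite /sig_quad /sample_expect; congr sphere_expect; apply/funext => q.
congr iter_expect; apply/funext => xs; rewrite -(sig_err_lin _ _ b).
by congr (EFin (sig_err _ _ _ _)); apply/funext => x; rewrite dotp_relu; ring.
Qed.

Lemma measurable_unif_sig_quad_aff :
  measurable_fun [set: point] (fun wv => U (fun l => sig_quad wv l (- l))).
Proof.
apply: (measurable_expectation hU (fun p : point * R => sig_quad p.1 p.2 (- p.2))).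
  exact: measurable_sig_quad measurable_fst measurable_snd
    (measurable_funN measurable_snd).
by move=> p; exact: sig_quad_ge0.
Qed.

Lemma measurable_unif2_sig_quad :
  measurable_fun [set: point] (fun wv => U (fun l1 => U (sig_quad wv l1))).
Proof.
apply: (measurable_expectation hU (fun p : point * R => U (sig_quad p.1 p.2))).
- apply: (measurable_expectation hU (fun p : (point * R) * R => sig_quad p.1.1 p.1.2 p.2)).
    by apply: measurable_sig_quad; do ?apply: measurableT_comp.
  by move=> p; exact: sig_quad_ge0.
- by move=> p; apply: (expectation_ge0 hU) => t; exact: sig_quad_ge0.
Qed.

End tasks.
End signal.
End expectation.

Theorem mainTheorem10 (R : realType) (d : nat) (L : R) (n : nat) (w : R) :
  (0 < d)%N -> 0 < L -> (1 <= n)%N ->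
  (((1 / 2 : R)%:E * L_sig n w (@D_aff R d L)) <= L_sig n w (@D_plus R d L))%E.
Proof.
move=> _ L_gt0 _.
have hU := unif_expect_is_expectation L L_gt0.
rewrite (L_sig_aff_eq d n w L L_gt0) (L_sig_plus_eq d n w L L_gt0).
apply: (expectation_half_le (sphere_expect_is_expectation d)).
- exact: measurable_unif_sig_quad_aff.
- exact: measurable_unif2_sig_quad.
- by move=> wv; apply: (expectation_ge0 hU) => l; exact: sig_quad_ge0.
- by move=> wv; do 2 apply: (expectation_ge0 hU) => ?; exact: sig_quad_ge0.
- by move=> wv; exact: unif_sig_quad_aff_le.
Qed.
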